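(* Fix a round $t$ and a nonempty set $\bm{S}_t$ of scheduled devices. For device $k$, let the local computation latency be $\mathcal{T}_k^{\rm L}=\tau D_kC_k/(f_kn_k)$ and computation energy $E_{k}^{\rm L}=\kappa\tau D_kC_kf_k^2/n_k$. Given bandwidth fraction $\theta_{k,t}\in[0,1]$ and transmit power $p_{k,t}$, the upload latency is $\mathcal{T}_{k,t}^{\rm U}=\frac{Qq}{\theta_{k,t}B\log_2(1+\frac{p_{k,t}h_{k,t}}{\theta_{k,t}BN_0})}$ and the upload energy is $E_{k,t}^{\rm U}=p_{k,t}\mathcal{T}_{k,t}^{\rm U}=\frac{\theta_{k,t}B\mathcal{T}_{k,t}^{\rm U}N_0}{h_{k,t}}\big(2^{\frac{Qq}{\theta_{k,t}B\mathcal{T}_{k,t}^{\rm U}}}-1\big)$; let $E_{k,t}=E_k^{\rm L}+E_{k,t}^{\rm U}$. Consider the problem $$\mathcal{P}_1:\ \min_{\bm{\theta}_t,\bm{p}_t}\ \sum_{k\in\bm{S}_t}q_k(t)E_{k,t}\quad\text{s.t. } \mathcal{T}_k^{\rm L}+\mathcal{T}_{k,t}^{\rm U}\le\mathcal{T}_{\max}\ \forall k,\ \ \sum_{k=1}^K\theta_{k,t}\le1,\ \ 0\le\theta_{k,t}\le1\ \forall k.$$ Then the optimal solution of $\mathcal{P}_1$ satisfies $\mathcal{T}_{k,t}^{\rm U}=\mathcal{T}_{\max}-\mathcal{T}_k^{\rm L}$, and the optimal transmit power of device $k$ satisfies $$p_{k,t}=\frac{\theta_{k,t}BN_0}{h_{k,t}}\Big(2^{\frac{Qq}{(\mathcal{T}_{\max}-\mathcal{T}_k^{\rm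 L})\theta_{k,t}B}}-1\Big).$$
   Context: Parameters: $\tau$ local iterations, $D_k$ number of local samples, $C_k$ FLOPs per sample, $f_k$ CPU frequency, $n_k$ FLOPs per cycle, $\kappa$ power coefficient, $B$ total bandwidth (Hz), $h_{k,t}>0$ channel gain, $N_0$ noise power spectral density, $Q$ number of uploaded parameters and $q$ bits per parameter, $\mathcal{T}_{\max}$ the per-round deadline, and $q_k(t)\ge0$ a virtual energy queue of device $k$ (weights). *)

From mathcomp Require Import all_boot all_order all_algebra.
From mathcomp Require Import all_classical all_reals all_analysis.
Set Implicit Arguments. Unset Strict Implicit. Unset Printing Implicit Defensive.
Import Order.TTheory GRing.Theory Num.Theory.
Local Open Scope ring_scope.

Section FL.
Variable R : realType.

Definition log2 (x : R) : R := ln x / ln 2.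

Definition latL (tau D C f n : R) : R := tau * D * C / (f * n).

Definition enL (kappa tau D C f n : R) : R := kappa * tau * D * C * f ^+ 2 / n.

Definition latU (Q qb B N0 h theta p : R) : R :=
  Q * qb / (theta * B * log2 (1 + p * h / (theta * B * N0))).

Definition enU (Q qb B N0 h theta p : R) : R := p * latU Q qb B N0 h theta p.

End FL.

(* With the bandwidth fractions fixed, the devices decouple. Writing a for
   h / (theta B N0), the upload latency is proportional to 1 / ln(1 + a p) and
   the upload energy to p / ln(1 + a p); by strict concavity of ln the first
   strictly decreases and the second strictly increases in p. So a device's
   power cannot be below the power p* whose latency is exactly
   Tmax - T^L (the deadline would fail), nor above it (lowering it to p* keeps
   feasibility and strictly lowers the weighted energy). Solving
   latU p* = Tmax - T^L for p* gives the stated formula. *)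

From mathcomp Require Import all_boot all_order all_algebra.
From mathcomp Require Import all_classical all_reals all_analysis.
From mathcomp Require Import ring lra.
Import Order.TTheory GRing.Theory Num.Theory.
Local Open Scope ring_scope.

Set Implicit Arguments.
Unset Strict Implicit.

Section LnStrictConcavity.
Variable R : realType.

Lemma ln_lt_subr1 (x : R) : 0 < x -> x != 1 -> ln x < x - 1.
Proof.
move=> x_gt0 x_neq1; have ln_neq0 : ln x != 0 by rewrite ln_eq0.
by have := expR_gt1Dx ln_neq0; rewrite lnK ?posrE // ltrBrDl.
Qed.

Lemma lt_concave_ln (s a b : R) : 0 < s < 1 -> 0 < a -> 0 < b -> a != b ->
  s * ln a + (1 - s) * ln b < ln (s * a + (1 - s) * b).
Proof.
move=> /andP[s_gt0 s_lt1] a_gt0 b_gt0 a_neq_b.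
set m := s * a + (1 - s) * b.
have m_gt0 : 0 < m by rewrite addr_gt0 ?mulr_gt0 ?subr_gt0.
have ln_ratio (x : R) : 0 < x -> x != m -> ln x - ln m < x / m - 1.
  move=> x_gt0 x_neq_m; rewrite -ln_div ?posrE //.
  apply: ln_lt_subr1; first by rewrite divr_gt0.
  apply: contra x_neq_m => /eqP xm1.
  by rewrite -[x](divfK (lt0r_neq0 m_gt0)) xm1 mul1r.
have s1_gt0 : 0 < 1 - s by rewrite subr_gt0.
have a_neq_m : a != m.
  rewrite -subr_eq0 (_ : a - m = (1 - s) * (a - b)); last by rewrite /m; ring.
  by rewrite mulf_neq0 ?subr_eq0 ?(gt_eqF s_lt1).
have b_neq_m : b != m.
  rewrite -subr_eq0 (_ : b - m = s * (b - a)); last by rewrite /m; ring.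
  by rewrite mulf_neq0 ?(gt_eqF s_gt0) // subr_eq0 eq_sym.
have ha := ln_ratio a a_gt0 a_neq_m; have hb := ln_ratio b b_gt0 b_neq_m.
have convex_comb : s * (a / m - 1) + (1 - s) * (b / m - 1) = 0.
  by rewrite /m; field; rewrite lt0r_neq0.
nra.
Qed.

Lemma lt_mul_ln1DM (a x y : R) : 0 < a -> 0 < x -> x < y ->
  x * ln (1 + a * y) < y * ln (1 + a * x).
Proof.
move=> a_gt0 x_gt0 x_lt_y; have y_gt0 : 0 < y := lt_trans x_gt0 x_lt_y.
have s_in01 : 0 < x / y < 1 by rewrite divr_gt0 //= ltr_pdivrMr ?mul1r.
have ay_gt0 : 0 < 1 + a * y by rewrite addr_gt0 ?mulr_gt0.
have ay_neq1 : 1 + a * y != 1 by rewrite gt_eqF // ltrDl mulr_gt0.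
have := lt_concave_ln s_in01 ay_gt0 ltr01 ay_neq1.
rewrite ln1 mulr0 addr0 mulr1.
have -> : x / y * (1 + a * y) + (1 - x / y) = 1 + a * x.
  by field; rewrite lt0r_neq0.
by rewrite -(ltr_pM2l y_gt0) mulrA mulrCA divff ?mulr1 // lt0r_neq0.
Qed.

End LnStrictConcavity.

Section Upload.
Variables (R : realType) (Q qb B N0 h th : R).
Hypotheses (Q_gt0 : 0 < Q) (qb_gt0 : 0 < qb) (B_gt0 : 0 < B) (N0_gt0 : 0 < N0)
  (h_gt0 : 0 < h) (th_gt0 : 0 < th).

Let snr := h / (th * B * N0).
Let latency_scale := Q * qb * ln 2 / (th * B).

Let snr_gt0 : 0 < snr. Proof. by rewrite divr_gt0 ?mulr_gt0. Qed.

Let latency_scale_gt0 : 0 < latency_scale.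
Proof. by rewrite divr_gt0 ?mulr_gt0 // ln_gt0 // ltr1n. Qed.

Let ltr1Dsnr (x : R) : 0 < x -> 1 < 1 + snr * x.
Proof. by move=> x_gt0; rewrite ltrDl mulr_gt0. Qed.

Let ln1Dsnr_gt0 (x : R) : 0 < x -> 0 < ln (1 + snr * x).
Proof. by move=> x_gt0; rewrite ln_gt0 ?ltr1Dsnr. Qed.

Lemma latUE (x : R) : 0 < x ->
  latU Q qb B N0 h th x = latency_scale / ln (1 + snr * x).
Proof.
move=> x_gt0; rewrite /latU /log2 (_ : x * h / _ = snr * x); last by rewrite /snr; ring.
have := ln1Dsnr_gt0 x_gt0; have : 0 < ln (2 : R) by rewrite ln_gt0 // ltr1n.
by move=> ? ?; rewrite /latency_scale; field; rewrite !lt0r_neq0 ?mulr_gt0.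
Qed.

Lemma latU_gt0 (x : R) : 0 < x -> 0 < latU Q qb B N0 h th x.
Proof. by move=> x_gt0; rewrite latUE // divr_gt0 ?ln1Dsnr_gt0. Qed.

Lemma latU_decreasing (x y : R) : 0 < x -> x < y ->
  latU Q qb B N0 h th y < latU Q qb B N0 h th x.
Proof.
move=> x_gt0 x_lt_y; have y_gt0 : 0 < y := lt_trans x_gt0 x_lt_y.
rewrite !latUE // ltr_pM2l // ltf_pV2 ?posrE ?ln1Dsnr_gt0 //.
have ? := lt_trans ltr01 (ltr1Dsnr x_gt0); have ? := lt_trans ltr01 (ltr1Dsnr y_gt0).
by rewrite ltr_ln ?posrE // ltrD2l ltr_pM2l.
Qed.

Lemma enU_increasing (x y : R) : 0 < x -> x < y ->
  enU Q qb B N0 h th x < enU Q qb B N0 h th y.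
Proof.
move=> x_gt0 x_lt_y; have y_gt0 : 0 < y := lt_trans x_gt0 x_lt_y.
rewrite /enU !latUE // (mulrCA x) (mulrCA y) ltr_pM2l //.
rewrite ltr_pdivrMr ?ln1Dsnr_gt0 // mulrAC ltr_pdivlMr ?ln1Dsnr_gt0 //.
exact: lt_mul_ln1DM.
Qed.

Definition power_for_latency (T : R) :=
  th * B * N0 / h * (powR 2 (Q * qb / (T * th * B)) - 1).

Lemma power_for_latency_gt0 (T : R) : 0 < T -> 0 < power_for_latency T.
Proof.
move=> T_gt0; rewrite mulr_gt0 ?divr_gt0 ?mulr_gt0 // subr_gt0.
by rewrite /powR pnatr_eq0 /= expR_gt1 mulr_gt0 ?divr_gt0 ?mulr_gt0 // ln_gt0 // ltr1n.
Qed.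

Lemma latU_power_for_latency (T : R) : 0 < T ->
  latU Q qb B N0 h th (power_for_latency T) = T.
Proof.
move=> T_gt0; rewrite /latU /log2 /power_for_latency.
have -> : th * B * N0 / h * (powR 2 (Q * qb / (T * th * B)) - 1) * h / (th * B * N0)
          = powR 2 (Q * qb / (T * th * B)) - 1.
  by field; rewrite !lt0r_neq0 ?mulr_gt0.
rewrite addrC subrK ln_powR; field.
by rewrite !lt0r_neq0 ?mulr_gt0 // ln_gt0 // ltr1n.
Qed.

End Upload.

Lemma ltr_sum_at (R : numDomainType) (I : finType) (P : {pred I}) (F G : I -> R)
    (k : I) : k \in P -> G k < F k -> (forall i, i != k -> G i = F i) ->
  \sum_(i in P) G i < \sum_(i in P) F i.
Proof.
move=> kP Gk_lt eqGF; rewrite (bigD1 k kP) [X in _ < X](bigD1 k kP) /=.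
by rewrite (eq_bigr F) ?ltrD2r // => i /andP[_ /eqGF].
Qed.

Theorem proposition1 (R : realType) (K : nat) (S : {set 'I_K})
  (tau kappa B N0 Q qb Tmax : R)
  (D C f n h w : 'I_K -> R)
  (theta p : 'I_K -> R) :
  (0 < #|S|)%N ->
  0 < tau -> 0 < kappa -> 0 < B -> 0 < N0 -> 0 < Q -> 0 < qb -> 0 < Tmax ->
  (forall k, 0 < D k) -> (forall k, 0 < C k) -> (forall k, 0 < f k) ->
  (forall k, 0 < n k) -> (forall k, 0 < h k) ->
  (forall k, k \in S -> 0 < w k) ->
  let feasible (th pw : 'I_K -> R) :=
    [/\ (forall k, k \in S ->
           [/\ 0 < th k, 0 < pw k &
               latL tau (D k) (C k) (f k) (n k)
               + latU Q qb B N0 (h k) (th k) (pw k) <= Tmax]),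
        \sum_(k < K) th k <= 1 &
        (forall k, 0 <= th k <= 1)] in
  let objective (th pw : 'I_K -> R) :=
    \sum_(k in S) w k * (enL kappa tau (D k) (C k) (f k) (n k)
                         + enU Q qb B N0 (h k) (th k) (pw k)) in
  feasible theta p ->
  (forall th pw, feasible th pw -> objective theta p <= objective th pw) ->
  forall k, k \in S ->
    latU Q qb B N0 (h k) (theta k) (p k) = Tmax - latL tau (D k) (C k) (f k) (n k)
    /\ p k = theta k * B * N0 / h k *
             (powR 2 (Q * qb / ((Tmax - latL tau (D k) (C k) (f k) (n k)) * theta k * B)) - 1).
Proof.
move=> _ _ _ B_gt0 N0_gt0 Q_gt0 qb_gt0 _ _ _ _ _ h_gt0 w_gt0 feasible objective
  feas_p opt_p k kS.
have [feas_dev sum_theta theta01] := feas_p.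
have [th_gt0 p_gt0 deadline] := feas_dev k kS.
set T := Tmax - _.
have lat_gt0 := latU_gt0 Q_gt0 qb_gt0 B_gt0 N0_gt0 (h_gt0 k) th_gt0 p_gt0.
have T_gt0 : 0 < T by rewrite subr_gt0 (lt_le_trans _ deadline) // ltrDl.
have p'_gt0 := power_for_latency_gt0 Q_gt0 qb_gt0 B_gt0 N0_gt0 (h_gt0 k) th_gt0 T_gt0.
have lat_p' := latU_power_for_latency Q_gt0 qb_gt0 B_gt0 N0_gt0 (h_gt0 k) th_gt0 T_gt0.
set p' := power_for_latency _ _ _ _ _ _ _ in p'_gt0 lat_p' *.
suff -> : p k = p' by split.
apply/eqP; rewrite eq_le !leNgt; apply/andP; split; apply/negP.
- move=> p'_lt_p; pose pw j := if j == k then p' else p j.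
  have feas_pw : feasible theta pw.
    split=> // j jS; rewrite /pw; case: eqP => [->|_]; last exact: feas_dev.
    by split=> //; rewrite lat_p' addrC subrK.
  have := opt_p theta pw feas_pw; apply/negP; rewrite -ltNge.
  apply: (ltr_sum_at kS) => [|i /negbTE i_neq_k]; last by rewrite /pw i_neq_k.
  rewrite /pw eqxx ltr_pM2l ?w_gt0 // ltrD2l.
  exact: enU_increasing.
- move=> p_lt_p'.
  have := latU_decreasing Q_gt0 qb_gt0 B_gt0 N0_gt0 (h_gt0 k) th_gt0 p_gt0 p_lt_p'.
  by rewrite lat_p' ltNge /T lerBrDl deadline.
Qed.
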